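(* Let $p,q,r\in(0,1/36)$, $h=1/2$, $a=1/3$, and let $\mathcal S=\{S_1,\dots,S_6\}$ be the system on $\mathbb R$ given by $S_1(x)=px$, $S_2(x)=a+rx$, $S_3(x)=h-qx$, $S_4(x)=h-r+rx$, $S_5(x)=1-a-rx$, $S_6(x)=1-r+rx$. If $\log p/\log r$ is irrational, then $\mathcal S$ does not satisfy the Weak Separation Property (for every $q\in(0,1/36)$).
   Context: For a system $\{S_1,\dots,S_m\}$ of contracting similarities of $\mathbb R$, let $\mathcal F=\{S_{\mathbf i}^{-1}S_{\mathbf j}:\mathbf i,\mathbf j\in I^*\}$, where $I^*$ is the set of finite words over $\{1,\dots,m\}$ and $S_{j_1\dots j_k}=S_{j_1}\circ\dots\circ S_{j_k}$. The system satisfies the Weak Separation Property (WSP) if $\mathrm{Id}\notin\overline{\mathcal F\setminus\{\mathrm{Id}\}}$, the closure taken in the space of affine maps $x\mapsto \lambda x+c$ of $\mathbb R$ with the topology of convergence of the coefficients $(\lambda,c)$. *)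

From Stdlib Require Import Reals List ZArith.
Import ListNotations.
Open Scope R_scope.

Record affine := mkAff { lam : R; tr : R }.

Definition aff_apply (f : affine) (x : R) : R := lam f * x + tr f.

Definition aff_id : affine := mkAff 1 0.

(* composition: (aff_comp f g) x = f (g x) *)
Definition aff_comp (f g : affine) : affine :=
  mkAff (lam f * lam g) (lam f * tr g + tr f).

Definition aff_inv (f : affine) : affine :=
  mkAff (/ lam f) (- tr f / lam f).

(* A system {S_1,...,S_m}: S : nat -> affine, only indices 1..m used.
   A finite word is a list of indices in {1,...,m}; the empty word gives Id. *)
Definition is_word (m : nat) (w : list nat) : Prop :=
  Forall (fun i => (1 <= i <= m)%nat) w.

Definition word_map (S : nat -> affine) (w : list nat) : affine :=
  fold_right (fun i acc => aff_comp (S i) acc) aff_id w.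

Definition in_F (m : nat) (S : nat -> affine) (f : affine) : Prop :=
  exists wi wj, is_word m wi /\ is_word m wj /\
    f = aff_comp (aff_inv (word_map S wi)) (word_map S wj).

(* Id lies in the closure of F \ {Id} (topology of convergence of (lam, c)). *)
Definition id_in_closure (m : nat) (S : nat -> affine) : Prop :=
  forall eps : R, eps > 0 ->
    exists f, in_F m S f /\ f <> aff_id /\
      Rabs (lam f - 1) < eps /\ Rabs (tr f) < eps.

Definition WSP (m : nat) (S : nat -> affine) : Prop :=
  ~ id_in_closure m S.

Definition sysS (p q r : R) (i : nat) : affine :=
  let h := 1/2 in let a := 1/3 in
  match i with
  | 1%nat => mkAff p 0
  | 2%nat => mkAff r a
  | 3%nat => mkAff (- q) h
  | 4%nat => mkAff r (h - r)
  | 5%nat => mkAff (- r) (1 - a)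
  | 6%nat => mkAff r (1 - r)
  | _ => aff_id
  end.

Definition irrational (x : R) : Prop :=
  ~ exists (a b : Z), b <> 0%Z /\ x = IZR a / IZR b.

(* The words S_4 S_6^k S_2 and S_3 S_1^m S_5 both send x to h - c (1 - a) + c r x,
   with c = r^(k+1) and c = q p^m respectively; hence the relative map between them
   has ratio t = q p^m / r^(k+1) and translation (1 - a)(1 - t)/r, and it tends to Id
   as t tends to 1 without ever being Id when t <> 1.  Since ln t = ln q + m ln p - (k+1) ln r
   and ln p, ln r are rationally independent, the values ln t are dense near 0, because
   the lattice Z ln p + Z ln r has arbitrarily small positive elements. *)
From Stdlib Require Import Reals List ZArith Lia Lra Classical.
Import ListNotations.
Open Scope R_scope.

(* [S i] is the homothety of ratio [l] centred at [z]. *)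
Lemma word_map_repeat_app (S : nat -> affine) i l z k w :
  S i = mkAff l (z * (1 - l)) ->
  word_map S (repeat i k ++ w) =
  mkAff (l ^ k * lam (word_map S w)) (l ^ k * tr (word_map S w) + z * (1 - l ^ k)).
Proof.
  intros HSi. induction k as [|k IH]; simpl.
  - destruct (word_map S w); simpl; f_equal; ring.
  - rewrite IH, HSi. unfold aff_comp; simpl. f_equal; ring.
Qed.

Lemma is_word_repeat_app m i k w :
  (1 <= i <= m)%nat -> is_word m w -> is_word m (repeat i k ++ w).
Proof. intros Hi Hw. induction k; simpl; [exact Hw | constructor; assumption]. Qed.

Definition witness (p q r : R) (m k : nat) : affine :=
  aff_comp (aff_inv (word_map (sysS p q r) (4%nat :: repeat 6%nat k ++ [2%nat])))
           (word_map (sysS p q r) (3%nat :: repeat 1%nat m ++ [5%nat])).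

Lemma witness_in_F p q r m k : in_F 6 (sysS p q r) (witness p q r m k).
Proof.
  exists (4%nat :: repeat 6%nat k ++ [2%nat]), (3%nat :: repeat 1%nat m ++ [5%nat]).
  split; [| split; [| reflexivity]];
    constructor; try lia; apply is_word_repeat_app; try lia; repeat constructor; lia.
Qed.

Lemma witness_coeffs p q r m k : 0 < r ->
  let t := q * p ^ m / r ^ S k in
  lam (witness p q r m k) = t /\ tr (witness p q r m k) = 2 / 3 * (1 - t) / r.
Proof.
  intros Hr t. unfold witness. cbn [word_map fold_right].
  fold (word_map (sysS p q r) (repeat 6%nat k ++ [2%nat])).
  fold (word_map (sysS p q r) (repeat 1%nat m ++ [5%nat])).
  rewrite (word_map_repeat_app _ 6 r 1) by (simpl; f_equal; ring).
  rewrite (word_map_repeat_app _ 1 p 0) by (simpl; f_equal; ring).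
  assert (0 < r ^ k) by (apply pow_lt; exact Hr).
  unfold t; simpl. split; field; lra.
Qed.

Lemma ln_witness_ratio p q r m k : 0 < p -> 0 < q -> 0 < r ->
  ln (q * p ^ m / r ^ S k) = ln q - INR m * - ln p + INR (S k) * - ln r.
Proof.
  intros Hp Hq Hr.
  assert (0 < p ^ m) by (apply pow_lt; exact Hp).
  assert (0 < / r ^ S k) by (apply Rinv_0_lt_compat, pow_lt; exact Hr).
  unfold Rdiv. rewrite ln_mult, ln_mult, ln_Rinv, !ln_pow by (try apply pow_lt; nra). ring.
Qed.

Lemma witness_near_id p q r m k eps : 0 < r < 1 ->
  0 < Rabs (q * p ^ m / r ^ S k - 1) < eps * r ->
  witness p q r m k <> aff_id /\
  Rabs (lam (witness p q r m k) - 1) < eps /\ Rabs (tr (witness p q r m k)) < eps.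
Proof.
  intros Hr.
  destruct (witness_coeffs p q r m k (proj1 Hr)) as [Hlam Htr]. rewrite Hlam, Htr.
  set (t := q * p ^ m / r ^ S k). intros [Ht0 Ht1].
  assert (Hr3 : 0 < 2 / 3 / r) by (apply Rdiv_lt_0_compat; lra).
  split; [| split].
  - intro Hid. rewrite Hid in Hlam. cbn [lam aff_id] in Hlam. fold t in Hlam.
    rewrite <- Hlam, Rminus_diag, Rabs_R0 in Ht0. lra.
  - nra.
  - replace (2 / 3 * (1 - t) / r) with (- (2 / 3 / r) * (t - 1)) by (field; lra).
    rewrite Rabs_mult, Rabs_Ropp, Rabs_pos_eq by lra.
    apply Rlt_trans with (2 / 3 / r * (eps * r)).
    + apply Rmult_lt_compat_l; assumption.
    + replace (2 / 3 / r * (eps * r)) with (2 / 3 * eps) by (field; lra). nra.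
Qed.

Lemma irrational_ratio_independent x y : y <> 0 -> irrational (x / y) ->
  forall A B : Z, IZR A * x + IZR B * y = 0 -> A = 0%Z /\ B = 0%Z.
Proof.
  intros Hy Hirr A B HAB. destruct (Z.eq_dec A 0) as [-> | HA].
  - split; [reflexivity |]. apply eq_IZR_R0.
    apply (Rmult_eq_reg_r y); [lra | exact Hy].
  - exfalso. apply Hirr. exists (- B)%Z, A. split; [exact HA |].
    apply not_0_IZR in HA. rewrite opp_IZR.
    field_simplify_eq; [lra | split; assumption].
Qed.

Lemma INR_Z_to_nat z : (0 <= z)%Z -> INR (Z.to_nat z) = IZR z.
Proof. intros Hz. rewrite INR_IZR_INZ, Z2Nat.id; [reflexivity | exact Hz]. Qed.

Lemma nat_strictly_below y : 0 < y -> exists s : nat, y - 1 <= INR s < y.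
Proof.
  intros Hy. destruct (archimed (- y)) as [Hup1 Hup2].
  assert (Hs : (-1 < - up (- y))%Z) by (apply lt_IZR; rewrite opp_IZR; lra).
  exists (Z.to_nat (- up (- y))).
  rewrite INR_Z_to_nat, opp_IZR by lia. lra.
Qed.

Lemma near_1_of_ln_small delta : 0 < delta ->
  exists eta, 0 < eta /\ forall t, 0 < t -> Rabs (ln t) < eta -> Rabs (t - 1) < delta.
Proof.
  intros Hdelta. set (d := Rmin delta (1 / 2)).
  assert (Hd : 0 < d <= 1 / 2) by (split; [apply Rmin_glb_lt | apply Rmin_r]; lra).
  assert (Hup : 0 < ln (1 + d)) by (rewrite <- ln_1; apply ln_increasing; lra).
  assert (Hlow : ln (1 - d) < 0) by (rewrite <- ln_1; apply ln_increasing; lra).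
  exists (Rmin (ln (1 + d)) (- ln (1 - d))). split; [apply Rmin_glb_lt; lra |].
  intros t Ht Hln. apply Rabs_def2 in Hln as [Hln1 Hln2].
  assert (t < 1 + d).
  { apply ln_lt_inv; [exact Ht | lra |]. pose proof (Rmin_l (ln (1 + d)) (- ln (1 - d))). lra. }
  assert (1 - d < t).
  { apply ln_lt_inv; [lra | exact Ht |]. pose proof (Rmin_r (ln (1 + d)) (- ln (1 - d))). lra. }
  pose proof (Rmin_l delta (1 / 2)) as Hdelta'. fold d in Hdelta'. apply Rabs_def1; lra.
Qed.

Section Lattice.

Variables al be : R.
Hypothesis al_pos : 0 < al.
Hypothesis be_pos : 0 < be.
Hypothesis independent :
  forall A B : Z, IZR A * al + IZR B * be = 0 -> A = 0%Z /\ B = 0%Z.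

Definition lattice (x : R) : Prop := exists j k : Z, x = IZR j * al + IZR k * be.

Lemma lattice_lincomb a b x y :
  lattice x -> lattice y -> lattice (IZR a * x + IZR b * y).
Proof.
  intros [jx [kx ->]] [jy [ky ->]].
  exists (a * jx + b * jy)%Z, (a * kx + b * ky)%Z.
  rewrite !plus_IZR, !mult_IZR. ring.
Qed.

Lemma lattice_not_cyclic e : exists g, lattice g /\ forall n : Z, g <> IZR n * e.
Proof.
  destruct (classic (exists n : Z, al = IZR n * e)) as [[n1 Hn1] | Hal].
  - exists be. split; [exists 0%Z, 1%Z; ring |]. intros n2 Hn2.
    destruct (independent n2 (- n1)) as [_ Hn1z]; [rewrite opp_IZR, Hn1, Hn2; ring |].
    assert (n1 = 0%Z) as -> by lia. rewrite Rmult_0_l in Hn1. lra.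
  - exists al. split; [exists 1%Z, 0%Z; ring |]. intros n Hn. apply Hal. exists n. exact Hn.
Qed.

(* One Euclidean division step by an element g outside Z e. *)
Lemma lattice_halve e : lattice e -> 0 < e -> exists e', lattice e' /\ 0 < e' <= e / 2.
Proof.
  intros He Hpos. destruct (lattice_not_cyclic e) as (g & Hg & Hnot).
  set (n := (up (g / e) - 1)%Z).
  destruct (archimed (g / e)) as [Hup1 Hup2].
  assert (Hn : g / e - 1 < IZR n <= g / e) by (unfold n; rewrite minus_IZR; lra).
  assert (Hge : g = g / e * e) by (field; lra).
  set (rho := IZR 1 * g + IZR (- n) * e).
  assert (Hrho : 0 <= rho < e) by (unfold rho; rewrite opp_IZR; split; nra).
  assert (Hrho0 : rho <> 0) by (unfold rho; rewrite opp_IZR; intro; apply (Hnot n); lra).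
  destruct (Rle_dec rho (e / 2)).
  - exists rho. split; [apply lattice_lincomb; assumption | lra].
  - exists (IZR 1 * e + IZR (-1) * rho). split.
    + apply lattice_lincomb; [exact He | apply lattice_lincomb; assumption].
    + lra.
Qed.

Lemma lattice_small eta : 0 < eta -> exists x, lattice x /\ 0 < x < eta.
Proof.
  intros Heta.
  assert (Hhalves : forall N, exists x, lattice x /\ 0 < x <= be * (/ 2) ^ N).
  { induction N as [|N (x & Hx & Hxb)].
    - exists be. split; [exists 0%Z, 1%Z; ring | simpl; lra].
    - destruct (lattice_halve x Hx) as (x' & Hx' & Hb); [lra |].
      exists x'. split; [exact Hx' | simpl; lra]. }
  destruct (pow_lt_1_zero (/ 2)) with (y := eta / be) as [N HN].
  { rewrite Rabs_pos_eq; lra. }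
  { apply Rdiv_lt_0_compat; assumption. }
  destruct (Hhalves N) as (x & Hx & Hxb). exists x. split; [exact Hx |].
  specialize (HN N (le_n N)). rewrite Rabs_pos_eq in HN by (apply pow_le; lra).
  apply (Rmult_lt_compat_l be) in HN; [| exact be_pos].
  replace (be * (eta / be)) with eta in HN by (field; lra). lra.
Qed.

Lemma nat_combination_small eta : 0 < eta ->
  exists J K : nat, 0 < Rabs (INR J * al - INR K * be) < eta.
Proof.
  intros Heta.
  destruct (lattice_small (Rmin eta (Rmin al be))) as (x & (j & k & ->) & Hx0 & Hx).
  { repeat apply Rmin_glb_lt; assumption. }
  pose proof (Rmin_l eta (Rmin al be)) as Heta'.
  pose proof (Rmin_r eta (Rmin al be)) as Hab.
  pose proof (Rmin_l al be). pose proof (Rmin_r al be).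
  destruct (Z_le_gt_dec 0 j) as [Hj | Hj].
  - assert (Hk : (k <= 0)%Z).
    { destruct (Z_le_gt_dec k 0) as [Hk | Hk]; [exact Hk | exfalso].
      apply IZR_le in Hj. assert (1 <= IZR k) by (apply IZR_le; lia). nra. }
    exists (Z.to_nat j), (Z.to_nat (- k)).
    rewrite !INR_Z_to_nat, opp_IZR by lia. rewrite Rabs_right; lra.
  - assert (Hk : (0 < k)%Z).
    { destruct (Z_le_gt_dec k 0) as [Hk | Hk]; [exfalso | lia].
      apply IZR_le in Hk. assert (IZR j <= -1) by (apply IZR_le; lia). nra. }
    exists (Z.to_nat (- j)), (Z.to_nat k).
    rewrite !INR_Z_to_nat, opp_IZR by lia. rewrite Rabs_left; lra.
Qed.

Lemma lattice_approx L eta : 0 < eta ->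
  exists m n : nat, (1 <= n)%nat /\ 0 < Rabs (L - INR m * al + INR n * be) < eta.
Proof.
  intros Heta. destruct (nat_combination_small eta Heta) as (J & K & HD).
  set (D := INR J * al - INR K * be) in *.
  assert (HD0 : D <> 0) by (intro E; rewrite E, Rabs_R0 in HD; lra).
  (* First move L into the half-line of the sign of D, then walk back towards 0 in steps D. *)
  assert (Hstart : exists m0 n0 : nat,
             (1 <= n0)%nat /\ 0 < (L - INR m0 * al + INR n0 * be) / D).
  { destruct (Rlt_dec 0 D) as [HDpos | HDneg].
    - destruct (INR_archimed be (- L) be_pos) as [N HN].
      exists 0%nat, (S N). split; [lia |].
      apply Rdiv_lt_0_compat; [rewrite S_INR; simpl; lra | exact HDpos].
    - destruct (INR_archimed al (L + be) al_pos) as [N HN].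
      exists N, 1%nat. split; [lia |].
      replace ((L - INR N * al + INR 1 * be) / D)
        with (- (L - INR N * al + INR 1 * be) / - D) by (field; exact HD0).
      apply Rdiv_lt_0_compat; simpl; lra. }
  destruct Hstart as (m0 & n0 & Hn0 & Hy).
  set (y := (L - INR m0 * al + INR n0 * be) / D) in *.
  destruct (nat_strictly_below y Hy) as [s Hs].
  exists (m0 + s * J)%nat, (n0 + s * K)%nat. split; [lia |].
  replace (L - INR (m0 + s * J) * al + INR (n0 + s * K) * be) with (D * (y - INR s))
    by (rewrite !plus_INR, !mult_INR; unfold y, D; field; exact HD0).
  rewrite Rabs_mult, (Rabs_right (y - INR s)) by lra.
  split; [apply Rmult_lt_0_compat; [apply Rabs_pos_lt |]; lra | nra].
Qed.

End Lattice.

Theorem mainTheorem13 (p q r : R) :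
  0 < p < 1/36 -> 0 < q < 1/36 -> 0 < r < 1/36 ->
  irrational (ln p / ln r) ->
  ~ WSP 6 (sysS p q r).
Proof.
  intros Hp Hq Hr Hirr HWSP. apply HWSP. intros eps Heps.
  assert (Hlnp : ln p < 0) by (rewrite <- ln_1; apply ln_increasing; lra).
  assert (Hlnr : ln r < 0) by (rewrite <- ln_1; apply ln_increasing; lra).
  assert (Hind : forall A B : Z, IZR A * - ln p + IZR B * - ln r = 0 -> A = 0%Z /\ B = 0%Z).
  { apply irrational_ratio_independent; [lra |].
    replace (- ln p / - ln r) with (ln p / ln r) by (field; lra). exact Hirr. }
  destruct (near_1_of_ln_small (eps * r)) as (eta & Heta & Hnear); [nra |].
  destruct (lattice_approx (- ln p) (- ln r) ltac:(lra) ltac:(lra) Hind (ln q) eta Heta)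
    as (m & [|k] & Hn & Happrox); [lia |].
  rewrite <- ln_witness_ratio in Happrox by lra.
  set (t := q * p ^ m / r ^ S k) in *.
  assert (Ht : 0 < t).
  { apply Rdiv_lt_0_compat; [apply Rmult_lt_0_compat |]; try apply pow_lt; lra. }
  assert (Ht1 : 0 < Rabs (t - 1)).
  { apply Rabs_pos_lt. intro Ht1. replace t with 1 in Happrox by lra.
    rewrite ln_1, Rabs_R0 in Happrox. lra. }
  assert (Hclose : Rabs (t - 1) < eps * r) by (apply Hnear; lra).
  destruct (witness_near_id p q r m k eps) as (Hne & Hlam & Htr); [lra | split; assumption |].
  exists (witness p q r m k). repeat split; try assumption. apply witness_in_F.
Qed.
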